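(* Let $X$ be a topological space with a regular $G_\delta$-diagonal and let $E$ be a $B_1$-retract of $X$. Then $E$ is a $G_\delta$-set in $X$.
   Context: A function $f:X\to Y$ between topological spaces is a Baire-one function if it is the pointwise limit of a sequence of continuous functions $f_n:X\to Y$. A subset $E$ of $X$ (with the subspace topology) is a $B_1$-retract of $X$ if there exists a Baire-one function $r:X\to E$ with $r(x)=x$ for all $x\in E$. A subset $A$ of a topological space $Z$ is a regular $G_\delta$-set if there is a sequence $(G_n)_{n\ge1}$ of open sets in $Z$ with $A=\bigcap_n G_n=\bigcap_n \overline{G_n}$. $X$ has a regular $G_\delta$-diagonal if $\Delta=\{(x,x):x\in X\}$ is a regular $G_\delta$-set in $X\times X$. *)

Set Implicit Arguments.

Definition is_topology (T : Type) (op : (T -> Prop) -> Prop) : Prop :=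
  op (fun _ => True) /\
  (forall U V, op U -> op V -> op (fun x => U x /\ V x)) /\
  (forall F : (T -> Prop) -> Prop, (forall U, F U -> op U) ->
     op (fun x => exists U, F U /\ U x)).

Definition prod_open (X Y : Type) (opX : (X -> Prop) -> Prop)
  (opY : (Y -> Prop) -> Prop) (W : X * Y -> Prop) : Prop :=
  forall p, W p -> exists U V, opX U /\ opY V /\ U (fst p) /\ V (snd p) /\
    (forall q, U (fst q) -> V (snd q) -> W q).

Definition sub_open (X : Type) (opX : (X -> Prop) -> Prop) (E : X -> Prop)
  (W : {x : X | E x} -> Prop) : Prop :=
  exists U, opX U /\ forall y, W y <-> U (proj1_sig y).

Definition closure (T : Type) (op : (T -> Prop) -> Prop) (A : T -> Prop)
  (x : T) : Prop :=
  forall U, op U -> U x -> exists y, U y /\ A y.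

Definition continuous (X Y : Type) (opX : (X -> Prop) -> Prop)
  (opY : (Y -> Prop) -> Prop) (f : X -> Y) : Prop :=
  forall V, opY V -> opX (fun x => V (f x)).

Definition converges (Y : Type) (opY : (Y -> Prop) -> Prop) (u : nat -> Y)
  (y : Y) : Prop :=
  forall V, opY V -> V y -> exists N, forall n, N <= n -> V (u n).

Definition baire_one (X Y : Type) (opX : (X -> Prop) -> Prop)
  (opY : (Y -> Prop) -> Prop) (f : X -> Y) : Prop :=
  exists fn : nat -> X -> Y, (forall n, continuous opX opY (fn n)) /\
    forall x, converges opY (fun n => fn n x) (f x).

Definition B1_retract (X : Type) (opX : (X -> Prop) -> Prop) (E : X -> Prop)
  : Prop :=
  exists r : X -> {x : X | E x}, baire_one opX (sub_open opX E) r /\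
    forall x (Hx : E x), proj1_sig (r x) = x.

Definition G_delta (T : Type) (op : (T -> Prop) -> Prop) (A : T -> Prop)
  : Prop :=
  exists G : nat -> T -> Prop, (forall n, op (G n)) /\
    forall x, A x <-> (forall n, G n x).

Definition regular_G_delta (T : Type) (op : (T -> Prop) -> Prop)
  (A : T -> Prop) : Prop :=
  exists G : nat -> T -> Prop, (forall n, op (G n)) /\
    (forall x, A x <-> (forall n, G n x)) /\
    (forall x, A x <-> (forall n, closure op (G n) x)).

Definition diagonal (X : Type) (p : X * X) : Prop := fst p = snd p.

Definition regular_G_delta_diagonal (X : Type) (opX : (X -> Prop) -> Prop)
  : Prop :=
  regular_G_delta (prod_open opX opX) (@diagonal X).

(** [E] is the fixed-point set of the retraction [rho], the pointwise limit of
    continuous maps [g_k].  If [G_n] witness the regular G_delta diagonal, the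
    sets [{x | exists k >= m, (x, g_k x) \in G_n}] are open; [x] lies in all of
    them iff [(x, rho x)] lies in every closure of [G_n], i.e. iff [rho x = x]. *)

From Stdlib Require Import Lia Cantor FunctionalExtensionality
  PropExtensionality.

Lemma open_locally (T : Type) (op : (T -> Prop) -> Prop) (A : T -> Prop) :
  is_topology op ->
  (forall x, A x -> exists U, op U /\ U x /\ forall z, U z -> A z) -> op A.
Proof.
  intros [_ [_ Hunion]] Hloc.
  replace A with (fun x => exists U, (op U /\ forall z, U z -> A z) /\ U x).
  - apply Hunion. intros U [HU _]. exact HU.
  - apply functional_extensionality; intros x.
    apply propositional_extensionality; split.
    + intros [U [[_ HUA] Hx]]. exact (HUA x Hx).
    + intros Ax. destruct (Hloc x Ax) as [U [HU [Hx HUA]]].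
      exists U. auto.
Qed.

Lemma continuous_proj1_sig (X : Type) (opX : (X -> Prop) -> Prop)
  (E : X -> Prop) : continuous (sub_open opX E) opX (@proj1_sig X E).
Proof. intros V HV. exists V. split; [exact HV | tauto]. Qed.

Lemma continuous_comp (X Y Z : Type) (opX : (X -> Prop) -> Prop)
  (opY : (Y -> Prop) -> Prop) (opZ : (Z -> Prop) -> Prop)
  (f : X -> Y) (h : Y -> Z) :
  continuous opX opY f -> continuous opY opZ h ->
  continuous opX opZ (fun x => h (f x)).
Proof. intros Hf Hh V HV. exact (Hf _ (Hh V HV)). Qed.

Lemma converges_continuous (Y Z : Type) (opY : (Y -> Prop) -> Prop)
  (opZ : (Z -> Prop) -> Prop) (h : Y -> Z) (u : nat -> Y) (y : Y) :
  continuous opY opZ h -> converges opY u y ->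
  converges opZ (fun n => h (u n)) (h y).
Proof. intros Hh Hu V HV Vy. exact (Hu _ (Hh V HV) Vy). Qed.

Lemma open_graph_preimage (X Y : Type) (opX : (X -> Prop) -> Prop)
  (opY : (Y -> Prop) -> Prop) (W : X * Y -> Prop) (g : X -> Y) :
  is_topology opX -> prod_open opX opY W -> continuous opX opY g ->
  opX (fun x => W (x, g x)).
Proof.
  intros HX HW Hg. apply open_locally; [exact HX|]. intros x Wx.
  destruct (HW (x, g x) Wx) as [U [V [HU [HV [Ux [Vgx HUV]]]]]].
  exists (fun z => U z /\ V (g z)). split; [|split].
  - destruct HX as [_ [Hinter _]]. exact (Hinter _ _ HU (Hg V HV)).
  - split; assumption.
  - intros z [Uz Vgz]. exact (HUV (z, g z) Uz Vgz).
Qed.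

Lemma G_delta_ext (T : Type) (op : (T -> Prop) -> Prop) (A B : T -> Prop) :
  (forall x, A x <-> B x) -> G_delta op A -> G_delta op B.
Proof.
  intros HAB [G [HG HAG]]. exists G. split; [exact HG|].
  intros x. rewrite <- HAB. apply HAG.
Qed.

Lemma G_delta_double_intersection (T : Type) (op : (T -> Prop) -> Prop)
  (A : T -> Prop) (W : nat -> nat -> T -> Prop) :
  (forall n m, op (W n m)) -> (forall x, A x <-> forall n m, W n m x) ->
  G_delta op A.
Proof.
  intros HW HAW.
  exists (fun N => W (fst (of_nat N)) (snd (of_nat N))). split.
  - intros N. apply HW.
  - intros x. rewrite HAW. split.
    + intros Hx N. apply Hx.
    + intros Hx n m. specialize (Hx (to_nat (n, m))).
      rewrite cancel_of_to in Hx. exact Hx.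
Qed.

Section FixedPoints.

Variables (X : Type) (opX : (X -> Prop) -> Prop).
Hypothesis HX : is_topology opX.
Variable G : nat -> X * X -> Prop.
Hypothesis G_open : forall n, prod_open opX opX (G n).
Hypothesis diagonal_G : forall p, diagonal p <-> forall n, G n p.
Hypothesis diagonal_closure_G :
  forall p, diagonal p <-> forall n, closure (prod_open opX opX) (G n) p.
Variables (g : nat -> X -> X) (rho : X -> X).
Hypothesis g_continuous : forall k, continuous opX opX (g k).
Hypothesis g_converges : forall x, converges opX (fun k => g k x) (rho x).

Definition approx_set (n m : nat) (x : X) : Prop :=
  exists k, m <= k /\ G n (x, g k x).

Lemma approx_set_open n m : opX (approx_set n m).
Proof.
  apply open_locally; [exact HX|]. intros x [k [Hk Gk]].
  exists (fun z => G n (z, g k z)). split; [|split].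
  - apply open_graph_preimage with (opY := opX);
    [exact HX | apply G_open | apply g_continuous].
  - exact Gk.
  - intros z Gz. exists k. auto.
Qed.

Lemma fixed_point_approx_set x : rho x = x -> forall n m, approx_set n m x.
Proof.
  intros Hfix n m.
  destruct (G_open n (x, x)) as [U [V [HU [HV [Ux [Vx HUV]]]]]].
  { apply diagonal_G. reflexivity. }
  simpl in *. rewrite <- Hfix in Vx.
  destruct (g_converges x V HV Vx) as [N HN].
  exists (max m N). split; [lia|].
  apply HUV; simpl; [exact Ux | apply HN; lia].
Qed.

Lemma approx_set_closure x :
  (forall n m, approx_set n m x) ->
  forall n, closure (prod_open opX opX) (G n) (x, rho x).
Proof.
  intros Happrox n O HO Ox.
  destruct (HO (x, rho x) Ox) as [U [V [HU [HV [Ux [Vrx HUV]]]]]].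
  simpl in *.
  destruct (g_converges x V HV Vrx) as [N HN].
  destruct (Happrox n N) as [k [Hk Gk]].
  exists (x, g k x). split; [|exact Gk].
  apply HUV; simpl; [exact Ux | apply HN; exact Hk].
Qed.

Lemma fixed_points_G_delta : G_delta opX (fun x => rho x = x).
Proof.
  apply (G_delta_double_intersection _ _ _ _ approx_set_open).
  intros x. split.
  - apply fixed_point_approx_set.
  - intros Happrox. symmetry.
    exact (proj2 (diagonal_closure_G (x, rho x)) (approx_set_closure x Happrox)).
Qed.

End FixedPoints.

Theorem proposition2p2 (X : Type) (opX : (X -> Prop) -> Prop)
  (HX : is_topology opX) (E : X -> Prop) :
  regular_G_delta_diagonal opX -> B1_retract opX E -> G_delta opX E.
Proof.
  intros [G [HG_open [HG HG_closure]]] [r [[fn [Hfn Hconv]] Hretract]].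
  apply (G_delta_ext _ _ (fun x => proj1_sig (r x) = x)).
  - intros x. split.
    + intros Hfix. rewrite <- Hfix. exact (proj2_sig (r x)).
    + apply Hretract.
  - apply (fixed_points_G_delta X opX HX G HG_open HG HG_closure
             (fun k x => proj1_sig (fn k x))).
    + intros k. apply continuous_comp with (opY := sub_open opX E).
      * apply Hfn.
      * apply continuous_proj1_sig.
    + intros x. apply converges_continuous with (opY := sub_open opX E).
      * apply continuous_proj1_sig.
      * apply Hconv.
Qed.
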